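(* Let $r\ge 2$ and $k\ge 2$ be integers. For the hypergraphical clustering game with conflict-free seeking (CF) players on $r$-uniform hypergraphs: (1) if $k\ge r$, then $\left(\frac{k}{k-1}\right)^{r-1}\le PoA(\mathbb{H}_r,k)\le \frac{2k+r-2}{2k-r}$; (2) if $\frac r2<k<r$, then $\frac{k-1}{r}\left(\frac{k}{k-1}\right)^{r-1}\le PoA(\mathbb{H}_r,k)\le \frac{k-1}{r}\cdot\frac{2k+r-2}{2k-r}$; (3) if $k\le \frac r2$, then $PoA(\mathbb{H}_r,k)=\infty$.
   Context: A hypergraph $H=(V,\mathcal{E})$ consists of a finite nonempty set $V$ of vertices (players) and a finite set $\mathcal{E}$ of nonempty subsets of $V$ (hyperedges); we assume $\mathcal{E}\neq\emptyset$. $H$ is $r$-uniform if $|e|=r$ for all $e\in\mathcal{E}$; $\mathbb{H}_r$ denotes the family of $r$-uniform hypergraphs. A $k$-coloring is a map $c:V\to[k]=\{1,\dots,k\}$; $\mathcal{C}(k)$ is the set of all $k$-colorings; for $S\subseteq V$, $c(S)\subseteq[k]$ is the set of colors of vertices of $S$. $\mathcal{E}(v)=\{e\in\mathcal{E}: v\in e\}$. With CF players, the utility of $v$ is $u_v(c)=|\{e\in\mathcal{E}(v): |c(e)|=|c(e\setminus\{v\})|+1\}|$, i.e. the number of hyperedges containing $v$ in which the color of $v$ differs from the colors of all other vertices of the hyperedge. The social welfare is $SW(c)=\sum_{v\in V}u_v(c)$. A coloring $c$ is a (pure) Nash equilibrium if $u_v(c)\ge u_v(c_{-v},i)$ for all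 $v\in V$ and $i\in[k]$, where $(c_{-v},i)$ is $c$ with the color of $v$ replaced by $i$. $O(H,k)=\max_{c\in\mathcal{C}(k)}SW(c)$, $NE(H,k)=\min\{SW(c): c\in\mathcal{C}(k)\text{ a Nash equilibrium}\}$, and $PoA(\mathcal{H},k)=\sup_{H\in\mathcal{H}} O(H,k)/NE(H,k)$, with the convention $x/0=+\infty$ for $x>0$. *)

From HB Require Import structures.
From mathcomp Require Import all_boot all_order all_algebra.
Set Implicit Arguments. Unset Strict Implicit. Unset Printing Implicit Defensive.
Import Order.TTheory GRing.Theory Num.Theory.

Definition r_uniform_hypergraph (r : nat) (V : finType) (E : {set {set V}}) : Prop :=
  [/\ 0 < #|V|, E != set0 & forall e, e \in E -> #|e| = r].

Definition util (V : finType) (k : nat) (E : {set {set V}}) (c : {ffun V -> 'I_k}) (v : V) : nat :=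
  #|[set e in E | (v \in e) && (#|c @: e| == (#|c @: (e :\ v)|).+1)]|.

Definition SW (V : finType) (k : nat) (E : {set {set V}}) (c : {ffun V -> 'I_k}) : nat :=
  \sum_(v : V) util E c v.

Definition recolor (V : finType) (k : nat) (c : {ffun V -> 'I_k}) (v : V) (i : 'I_k) : {ffun V -> 'I_k} :=
  [ffun w => if w == v then i else c w].

Definition is_NE (V : finType) (k : nat) (E : {set {set V}}) (c : {ffun V -> 'I_k}) : Prop :=
  forall (v : V) (i : 'I_k), util E (recolor c v i) v <= util E c v.

Definition OPT (V : finType) (k : nat) (E : {set {set V}}) : nat :=
  \max_(c : {ffun V -> 'I_k}) SW E c.

Local Open Scope ring_scope.

(* PoA(H_r,k) = sup_H O(H,k)/NE(H,k) (with x/0 = +oo, x>0) is expressed through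
   the following three predicates on the extended-real value of that supremum. *)

Definition PoA_le (r k : nat) (B : rat) : Prop :=
  forall (V : finType) (E : {set {set V}}), r_uniform_hypergraph r E ->
  forall c : {ffun V -> 'I_k}, is_NE E c -> (OPT k E)%:R <= B * (SW E c)%:R.

Definition PoA_ge (r k : nat) (L : rat) : Prop :=
  forall eps : rat, 0 < eps ->
  exists (V : finType) (E : {set {set V}}), r_uniform_hypergraph r E /\
  exists c : {ffun V -> 'I_k}, is_NE E c /\ (L - eps) * (SW E c)%:R < (OPT k E)%:R.

Definition PoA_infinite (r k : nat) : Prop :=
  forall M : rat,
  exists (V : finType) (E : {set {set V}}), r_uniform_hypergraph r E /\
  exists c : {ffun V -> 'I_k}, is_NE E c /\ M * (SW E c)%:R < (OPT k E)%:R.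

(* In a Nash equilibrium no vertex gains by moving to any of the k colours.  Summed over these
   k deviations, the utility v would get from an edge e is the number of colours missing from
   e \ v; over the r vertices of e this adds up to r (k - d) + s, where d is the number of
   colours on e and s its number of happy (uniquely coloured) vertices.  A colour class of e that
   is not a singleton has at least two vertices, so 2 d <= r + s.  Together these give
   r (2k - r) |E| <= (2k + r - 2) SW(c), while any colouring has at most r happy vertices per
   edge, and at most k - 1 when k < r.
   For the lower bounds, take the complete r-partite hypergraph with parts of size k, coloured by
   the position of each vertex inside its part: there the utility of a vertex does not depend on
   its own colour, so this is an equilibrium, whereas colouring vertices by their part makes most
   vertices happy in every edge.  For 2k <= r, a single edge coloured so that every colour occurs
   twice is an equilibrium of welfare 0. *)

From mathcomp Require Import all_boot all_order all_algebra.
From mathcomp Require Import zify ring.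
Set Implicit Arguments. Unset Strict Implicit. Unset Printing Implicit Defensive.
Import Order.TTheory GRing.Theory Num.Theory.

Lemma card_sep_sum (T : finType) (A : {set T}) (P : pred T) :
  #|[set x in A | P x]| = \sum_(x in A) P x.
Proof.
rewrite -sum1_card big_mkcond [RHS]big_mkcond; apply: eq_bigr => x _.
by rewrite inE; case: (x \in A); case: (P x).
Qed.

Lemma card_set_ord_le k (X : {set 'I_k}) : #|X| <= k.
Proof. by have := max_card X; rewrite card_ord. Qed.

Lemma sum_notin_ord k (X : {set 'I_k}) : \sum_(i < k) (i \notin X) = k - #|X|.
Proof.
have -> : \sum_(i < k) (i \notin X) = #|~: X|.
  by rewrite -sum1_card [RHS]big_mkcond; apply: eq_bigr => i _; rewrite inE; case: (i \in X).
by have := cardsC X; rewrite card_ord; lia.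
Qed.

Section Coloring.
Variables (V : finType) (k : nat).
Implicit Types (c : {ffun V -> 'I_k}) (e : {set V}) (E : {set {set V}}) (v w : V).

Definition uniquely_colored c e v := #|c @: e| == (#|c @: (e :\ v)|).+1.

Definition happy c e := [set v in e | uniquely_colored c e v].

Lemma util_happy E c v : util E c v = #|[set e in E | v \in happy c e]|.
Proof. by apply: eq_card => e; rewrite !inE. Qed.

Lemma SW_happy E c : SW E c = \sum_(e in E) #|happy c e|.
Proof.
rewrite /SW /util; under eq_bigr do rewrite card_sep_sum.
rewrite exchange_big; apply: eq_bigr => e _.
rewrite card_sep_sum [RHS]big_mkcond; apply: eq_bigr => v _.
by case: (v \in e).
Qed.

Lemma card_colors_split c e v : v \in e ->
  #|c @: e| = (c v \notin c @: (e :\ v)) + #|c @: (e :\ v)|.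
Proof. by move=> ve; rewrite -{1}(setD1K ve) imsetU1 cardsU1. Qed.

Lemma uniquely_coloredE c e v : v \in e ->
  uniquely_colored c e v = (c v \notin c @: (e :\ v)).
Proof.
move=> ve; rewrite /uniquely_colored (card_colors_split c ve).
by case: (c v \notin _); rewrite ?eqxx // add0n eqn_leq ltnn andbF.
Qed.

Lemma uniquely_coloredP c e v : v \in e ->
  reflect (forall w, w \in e -> w != v -> c w != c v) (uniquely_colored c e v).
Proof.
move=> ve; rewrite uniquely_coloredE //; apply: (iffP idP).
  move=> cv_new w we wv; apply: contraNneq cv_new => <-.
  by apply/imsetP; exists w; rewrite // !inE wv.
move=> cv_unique; apply/imsetP => -[w]; rewrite !inE => /andP [wv we] cvw.
by move: (cv_unique w we wv); rewrite cvw eqxx.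
Qed.

Lemma happy_sub c e : happy c e \subset e.
Proof. by apply/subsetP => v; rewrite inE => /andP []. Qed.

Lemma card_happy_le c e : #|happy c e| <= #|e|.
Proof. exact/subset_leq_card/happy_sub. Qed.

Lemma happy_inj c e : {in happy c e &, injective c}.
Proof.
move=> u u'; rewrite !inE => /andP [ue /(uniquely_coloredP _ ue) u_unique] /andP [u'e _] cuu'.
apply/eqP; apply: contraTT (eqxx (c u')) => neq.
by rewrite -{1}cuu' eq_sym; apply: u_unique; rewrite // eq_sym.
Qed.

Lemma card_happy_lt c e : k < #|e| -> #|happy c e| < k.
Proof.
move=> ke; have inj_c := card_in_imset (happy_inj (c := c) (e := e)).
have [w we w_unhappy] : exists2 w, w \in e & w \notin happy c e.
  apply/subsetPn; apply: contraTN ke => /subset_leq_card e_le.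
  by rewrite -leqNgt (leq_trans e_le) // -inj_c card_set_ord_le.
have cw_new : c w \notin c @: happy c e.
  apply/negP => /imsetP [u u_happy cwu].
  have wu : w != u by apply: contraNneq w_unhappy => ->.
  move: u_happy; rewrite inE => /andP [ue /(uniquely_coloredP _ ue) u_unique].
  by move: (u_unique w we wu); rewrite cwu eqxx.
by have := card_set_ord_le (c w |: c @: happy c e); rewrite cardsU1 cw_new inj_c.
Qed.

Lemma unhappy_partner c e w : w \in e :\: happy c e ->
  exists2 w', w' \in e :\: happy c e & (w' != w) && (c w' == c w).
Proof.
rewrite !inE => /andP [w_unhappy we]; move: w_unhappy; rewrite we /= uniquely_coloredE //.
rewrite negbK => /imsetP [w']; rewrite !inE => /andP [w'w w'e] cw'w.
exists w'; last by rewrite w'w cw'w eqxx.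
rewrite !inE w'e andbT; apply/negP => /(uniquely_coloredP _ w'e) w'_unique.
by move: (w'_unique w we); rewrite eq_sym w'w cw'w eqxx => /(_ isT).
Qed.

Lemma card_unhappy_colors c e :
  2 * #|c @: (e :\: happy c e)| <= #|e :\: happy c e|.
Proof.
set W := e :\: happy c e.
rewrite -[in X in _ <= X]sum1_card (partition_big_imset c) /= mulnC -sum_nat_const.
apply: leq_sum => _ /imsetP [w wW ->]; rewrite sum1dep_card.
have [w' w'W /andP [w'w /eqP cw'w]] := unhappy_partner wW.
apply: leq_trans (subset_leq_card (_ : [set w; w'] \subset _)).
  by rewrite cards2 eq_sym w'w.
apply/subsetP => y; rewrite in_set2 => /orP [] /eqP ->; rewrite inE ?cw'w eqxx andbT.
  exact: wW.
exact: w'W.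
Qed.

Lemma card_colors_le c e : 2 * #|c @: e| <= #|e| + #|happy c e|.
Proof.
have e_split : happy c e :|: (e :\: happy c e) = e.
  by rewrite -{1}(setIidPr (happy_sub c e)) setID.
have colors_split : #|c @: e| <= #|c @: happy c e| + #|c @: (e :\: happy c e)|.
  by rewrite -{1}e_split imsetU cardsU leq_subr.
have := card_unhappy_colors c e; rewrite cardsDS ?happy_sub //.
have := leq_imset_card c (happy c e); have := card_happy_le c e; lia.
Qed.

Lemma sum_missing_colors c e :
  \sum_(v in e) (k - #|c @: (e :\ v)|) = #|e| * (k - #|c @: e|) + #|happy c e|.
Proof.
have dk := card_set_ord_le (c @: e).
rewrite /happy card_sep_sum -sum_nat_const -big_split /=; apply: eq_bigr => v ve.
move: dk; rewrite (card_colors_split c ve) -uniquely_coloredE //.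
by case: uniquely_colored => /=; lia.
Qed.

Lemma recolor_id c v : recolor c v (c v) = c.
Proof. by apply/ffunP => w; rewrite ffunE; case: eqP => [->|]. Qed.

Lemma util_recolor E c v i :
  util E (recolor c v i) v = \sum_(e in E) ((v \in e) && (i \notin c @: (e :\ v))).
Proof.
rewrite /util card_sep_sum; apply: eq_bigr => e _; case ve: (v \in e) => //=.
have := uniquely_coloredE (recolor c v i) ve; rewrite /uniquely_colored => ->.
have -> : recolor c v i @: (e :\ v) = c @: (e :\ v).
  by apply: eq_in_imset => w; rewrite !inE ffunE => /andP [/negbTE -> _].
by rewrite ffunE eqxx.
Qed.

Lemma sum_util_recolor E c v :
  \sum_(i < k) util E (recolor c v i) v = \sum_(e in E | v \in e) (k - #|c @: (e :\ v)|).
Proof.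
rewrite (eq_bigr _ (fun i _ => util_recolor E c v i)) exchange_big big_mkcondr /=.
apply: eq_bigr => e _.
by case: (v \in e); rewrite /= ?sum_notin_ord // big1.
Qed.

Lemma NE_missing_colors_le E c : is_NE E c ->
  \sum_(e in E) \sum_(v in e) (k - #|c @: (e :\ v)|) <= k * SW E c.
Proof.
move=> NE; rewrite (exchange_big_dep xpredT) //= /SW big_distrr /=.
apply: leq_sum => v _; rewrite -sum_util_recolor.
apply: (@leq_trans (\sum_(i < k) util E c v)); first by apply: leq_sum => i _; apply: NE.
by rewrite sum_nat_const card_ord.
Qed.

Lemma edge_deviation_bound c e r : #|e| = r ->
  r * (2 * k - r) + 2 * #|happy c e|
  <= 2 * \sum_(v in e) (k - #|c @: (e :\ v)|) + r * #|happy c e|.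
Proof.
move=> er; rewrite sum_missing_colors er.
have := card_colors_le c e; have := card_set_ord_le (c @: e); rewrite er.
set s := #|happy c e|; set d := #|c @: e| => dk ds.
have : 2 * k - r <= 2 * (k - d) + s by lia.
move/(leq_mul (leqnn r)); rewrite mulnDr; lia.
Qed.

Lemma NE_welfare_bound r E c : (forall e, e \in E -> #|e| = r) -> is_NE E c ->
  r * (2 * k - r) * #|E| + 2 * SW E c <= (2 * k + r) * SW E c.
Proof.
move=> Er NE.
have := NE_missing_colors_le NE.
have : \sum_(e in E) (r * (2 * k - r) + 2 * #|happy c e|)
       <= \sum_(e in E) (2 * \sum_(v in e) (k - #|c @: (e :\ v)|) + r * #|happy c e|).
  by apply: leq_sum => e eE; apply: edge_deviation_bound; apply: Er.
rewrite [X in X <= _]big_split [X in _ <= X]big_split sum_nat_const -!big_distrr -SW_happy /=.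
set S := SW E c; set M := \sum_(e in E) \sum_(v in e) _; nia.
Qed.

Lemma SW_le_OPT E c : SW E c <= OPT k E.
Proof. exact: leq_bigmax. Qed.

Lemma OPT_le_happy_bound E m :
  (forall c e, e \in E -> #|happy c e| <= m) -> OPT k E <= #|E| * m.
Proof.
move=> happy_le; apply/bigmax_leqP => c _.
by rewrite SW_happy -sum_nat_const; apply: leq_sum => e; apply: happy_le.
Qed.
End Coloring.

Local Open Scope ring_scope.

Lemma PoA_le_of_happy_bound r k m : (2 <= r)%N -> (r < 2 * k)%N ->
  (forall (V : finType) (c : {ffun V -> 'I_k}) (e : {set V}),
     #|e| = r -> (#|happy c e| <= m)%N) ->
  PoA_le r k (m%:R / r%:R * ((2 * k + r - 2)%N%:R / (2 * k - r)%N%:R)).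
Proof.
move=> r_ge2 r_lt2k happy_le V E [_ _ Er] c NE.
have OPT_le : (OPT k E <= #|E| * m)%N.
  by apply: OPT_le_happy_bound => c' e eE; apply/happy_le/Er.
have welfare : (r * (2 * k - r) * #|E| <= (2 * k + r - 2) * SW E c)%N.
  have := NE_welfare_bound Er NE; rewrite mulnBl; lia.
have nat_bound : (OPT k E * (r * (2 * k - r)) <= m * (2 * k + r - 2) * SW E c)%N.
  move: welfare (leq_mul (leqnn (r * (2 * k - r))) OPT_le).
  set a := (r * _)%N; set N := (2 * k + r - 2)%N; set O := OPT k E; set S := SW E c.
  clearbody a N O S; nia.
have rD_gt0 : 0 < r%:R * (2 * k - r)%:R :> rat by rewrite -natrM ltr0n muln_gt0; lia.
by rewrite mulf_div mulrAC ler_pdivlMr // -!natrM ler_nat.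
Qed.

Lemma card_ffun_pinned (I T : finType) (p : I) (i : T) (Q : pred T) :
  #|[set f : {ffun I -> T} | (f p == i) && [forall q, (q != p) ==> Q (f q)]]|
  = (#|Q| ^ #|I|.-1)%N.
Proof.
pose F q := if q == p then pred1 i else [pred y | Q y].
have -> : #|[set f : {ffun I -> T} | (f p == i) && [forall q, (q != p) ==> Q (f q)]]|
        = #|family F|.
  apply: eq_card => f; rewrite inE; apply/andP/familyP => [[/eqP fp /forallP fQ] q|fF].
    by rewrite /F; case: eqP => [->|/eqP qp]; [rewrite inE fp | have := fQ q; rewrite qp].
  split; first by have := fF p; rewrite /F eqxx inE.
  by apply/forallP => q; apply/implyP => qp; have := fF q; rewrite /F (negbTE qp).
rewrite card_family foldrE big_map big_enum /= (bigD1 p) //= /F eqxx card1 mul1n.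
rewrite (eq_bigr (fun _ => #|Q|)); last by move=> q /negbTE ->.
by rewrite prod_nat_const cardC1.
Qed.

Section CompletePartite.
Variables (r k : nat).

Definition transversal (f : {ffun 'I_r -> 'I_k}) : {set 'I_r * 'I_k} :=
  [set (q, f q) | q : 'I_r].

Definition complete_partite : {set {set 'I_r * 'I_k}} :=
  [set transversal f | f : {ffun 'I_r -> 'I_k}].

Lemma mem_transversal f p i : ((p, i) \in transversal f) = (f p == i).
Proof. by apply/imsetP/eqP => [[q _ [-> ->]] // | <-]; exists p. Qed.

Lemma transversal_inj : injective transversal.
Proof.
move=> f g fg; apply/ffunP => q; apply/eqP.
by rewrite -mem_transversal fg mem_transversal.
Qed.

Lemma card_transversal f : #|transversal f| = r.
Proof. by rewrite card_imset ?card_ord // => q q' []. Qed.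

Lemma complete_partite_uniform : (0 < r)%N -> (0 < k)%N ->
  r_uniform_hypergraph r complete_partite.
Proof.
move=> r_gt0 k_gt0; split.
- by rewrite card_prod !card_ord muln_gt0 r_gt0.
- by apply/set0Pn; exists (transversal [ffun=> Ordinal k_gt0]); apply: imset_f.
- by move=> _ /imsetP [f _ ->]; apply: card_transversal.
Qed.

Lemma mem_happy_transversal (c : {ffun 'I_r * 'I_k -> 'I_k}) f p i :
  ((p, i) \in happy c (transversal f)) =
  (f p == i) && [forall q, (q != p) ==> (c (q, f q) != c (p, i))].
Proof.
rewrite inE mem_transversal; case fp: (f p == i) => //=.
have pf : (p, i) \in transversal f by rewrite mem_transversal.
apply/(uniquely_coloredP c pf)/forallP => [unique q | unique _ /imsetP [q _ ->] qp].
  by apply/implyP => qp; apply: unique; [apply: imset_f | apply: contra qp => /eqP [->]].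
apply: (implyP (unique q)); apply: contra qp => /eqP ->.
by rewrite (eqP fp).
Qed.

Lemma util_complete_partite (c : {ffun 'I_r * 'I_k -> 'I_k}) p i :
  util complete_partite c (p, i) =
  #|[set f : {ffun 'I_r -> 'I_k} |
     (f p == i) && [forall q, (q != p) ==> (c (q, f q) != c (p, i))]]|.
Proof.
rewrite util_happy -(card_imset _ transversal_inj); apply: eq_card => e.
rewrite inE; apply/andP/imsetP => [[/imsetP [f _ ->]] | [f]].
  by rewrite mem_happy_transversal => f_happy; exists f; rewrite ?inE.
by rewrite inE -mem_happy_transversal => f_happy ->; split; first exact: imset_f.
Qed.
End CompletePartite.

Section PartiteColorings.
Variables (r k : nat).
Local Notation K := (complete_partite r k).

Definition color_by_index : {ffun 'I_r * 'I_k -> 'I_k} := [ffun v => v.2].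

Lemma util_recolor_by_index v j : util K (recolor color_by_index v j) v = (k.-1 ^ r.-1)%N.
Proof.
case: v => p i; rewrite util_complete_partite.
transitivity #|[set f : {ffun 'I_r -> 'I_k} |
                (f p == i) && [forall q, (q != p) ==> (f q != j)]]|.
  apply: eq_card => f; rewrite !inE; case: (f p == i) => //=.
  apply: eq_forallb => q; rewrite !ffunE eqxx /=; case: eqP => [-> | /eqP qp] //=.
  by rewrite (_ : (q, f q) == (p, i) = false) //; apply: contraNF qp => /eqP [->].
rewrite (card_ffun_pinned p i (fun y => y != j)) card_ord.
by have := cardC1 j; rewrite card_ord => <-.
Qed.

Lemma util_color_by_index v : util K color_by_index v = (k.-1 ^ r.-1)%N.
Proof. by rewrite -{1}(recolor_id color_by_index v) util_recolor_by_index. Qed.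

Lemma color_by_index_NE : is_NE K color_by_index.
Proof. by move=> v i; rewrite util_color_by_index util_recolor_by_index. Qed.

Lemma SW_color_by_index : SW K color_by_index = (r * k * k.-1 ^ r.-1)%N.
Proof.
rewrite /SW (eq_bigr _ (fun v _ => util_color_by_index v)).
by rewrite sum_nat_const card_prod !card_ord.
Qed.

Hypothesis k_gt0 : (0 < k)%N.

Fact part_color_subproof (q : 'I_r) : (minn q k.-1 < k)%N.
Proof. by have := geq_minr q k.-1; lia. Qed.

Definition part_color (q : 'I_r) : 'I_k := Ordinal (part_color_subproof q).

Definition color_by_part : {ffun 'I_r * 'I_k -> 'I_k} := [ffun v => part_color v.1].

Lemma part_color_neq (p q : 'I_r) : q != p -> (p < k.-1)%N || (r <= k)%N ->
  part_color q != part_color p.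
Proof.
move=> qp p_small; apply: contra qp => /eqP /(congr1 val) /= pq.
apply/eqP/ord_inj; have := ltn_ord p; have := ltn_ord q.
by case/orP: p_small; lia.
Qed.

Lemma util_color_by_part (p : 'I_r) (i : 'I_k) : (p < k.-1)%N || (r <= k)%N ->
  util K color_by_part (p, i) = (k ^ r.-1)%N.
Proof.
move=> p_small; rewrite util_complete_partite.
transitivity #|[set f : {ffun 'I_r -> 'I_k} |
                (f p == i) && [forall q, (q != p) ==> xpredT (f q)]]|.
  apply: eq_card => f; rewrite !inE; case: (f p == i) => //=; apply: eq_forallb => q.
  by rewrite !ffunE /=; case qp: (q != p) => //=; apply: part_color_neq.
by rewrite (card_ffun_pinned p i xpredT) card_ord; congr (_ ^ _)%N; rewrite card_ord.
Qed.

Lemma SW_color_by_part_ge m : (m <= r)%N -> (m < k)%N || (r <= k)%N ->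
  (m * (k * k ^ r.-1) <= SW K color_by_part)%N.
Proof.
move=> m_le_r m_small.
have -> : SW K color_by_part = (\sum_(p < r) \sum_(i < k) util K color_by_part (p, i))%N.
  by rewrite /SW pair_big; apply: eq_bigr => -[].
rewrite (bigID (fun p : 'I_r => (p < m)%N)) /= (big_ord_narrow m_le_r).
apply: leq_trans (leq_addr _ _); rewrite -{1}(card_ord m) -sum_nat_const.
apply: leq_sum => p _; rewrite -{1}(card_ord k) -sum_nat_const; apply/eq_leq/eq_bigr => i _.
rewrite util_color_by_part //=; have := ltn_ord p.
by case/orP: m_small => ? ?; apply/orP; [left; lia | right].
Qed.
End PartiteColorings.

Lemma PoA_ge_complete_partite r k m : (0 < r)%N -> (2 <= k)%N -> (m <= r)%N ->
  (m < k)%N || (r <= k)%N ->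
  PoA_ge r k (m%:R / r%:R * (k%:R / (k.-1)%:R) ^+ r.-1).
Proof.
move=> r_gt0 k_ge2 m_le_r m_small eps eps_gt0.
have k_gt0 : (0 < k)%N by lia.
exists _, (complete_partite r k); split; first exact: complete_partite_uniform.
exists (color_by_index r k); split; first exact: color_by_index_NE.
have SW_gt0 : 0 < (SW (complete_partite r k) (color_by_index r k))%:R :> rat.
  rewrite SW_color_by_index ltr0n !muln_gt0 expn_gt0 r_gt0 k_gt0 /=.
  by apply/orP; left; lia.
have r_neq0 : r%:R != 0 :> rat by rewrite pnatr_eq0 -lt0n.
have k1_neq0 : (k.-1)%:R != 0 :> rat by rewrite pnatr_eq0; lia.
have L_SW : m%:R / r%:R * (k%:R / (k.-1)%:R) ^+ r.-1
            * (SW (complete_partite r k) (color_by_index r k))%:R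
            = (m * (k * k ^ r.-1))%N%:R :> rat.
  rewrite SW_color_by_index expr_div_n !natrM !natrX; field.
  by rewrite r_neq0 expf_neq0.
rewrite mulrBl L_SW ltrBlDr ltr_pwDr ?mulr_gt0 // ler_nat.
exact: leq_trans (SW_color_by_part_ge k_gt0 m_le_r m_small) (SW_le_OPT _ _).
Qed.

Section ColorMod.
Variables (r k : nat) (k_gt0 : (0 < k)%N).

Definition color_mod : {ffun 'I_r -> 'I_k} := [ffun v : 'I_r => Ordinal (ltn_pmod v k_gt0)].

Lemma color_mod_twice (v : 'I_r) (x : 'I_k) : (2 * k <= r)%N ->
  exists2 w, w != v & color_mod w = x.
Proof.
move=> two_k_le_r; have x_lt_k := ltn_ord x.
have x_lt_r : (x < r)%N by lia.
have xk_lt_r : (x + k < r)%N by lia.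
have mod_x : color_mod (Ordinal x_lt_r) = x by apply: val_inj; rewrite ffunE /= modn_small.
have mod_xk : color_mod (Ordinal xk_lt_r) = x.
  by apply: val_inj; rewrite ffunE /= modnDr modn_small.
have [<-|] := eqVneq (Ordinal x_lt_r) v; last by exists (Ordinal x_lt_r).
by exists (Ordinal xk_lt_r) => //; apply/eqP => /(congr1 val) /=; lia.
Qed.

Lemma util_single_edge_color_mod (c : {ffun 'I_r -> 'I_k}) v : (2 * k <= r)%N ->
  (forall w, w != v -> c w = color_mod w) -> util [set [set: 'I_r]] c v = 0%N.
Proof.
move=> two_k_le_r c_mod; apply/eqP; rewrite util_happy cards_eq0; apply/eqP/setP => e.
rewrite !inE; case: eqP => [-> | _] //=; rewrite in_setT /=.
apply/negP => /(uniquely_coloredP c (in_setT v)) v_unique.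
have [w wv cw] := color_mod_twice v (c v) two_k_le_r.
by move: (v_unique w (in_setT w) wv); rewrite c_mod // cw eqxx.
Qed.
End ColorMod.

Lemma PoA_infinite_single_edge r k : (2 <= k)%N -> (2 * k <= r)%N -> PoA_infinite r k.
Proof.
move=> k_ge2 two_k_le_r M; have k_gt0 : (0 < k)%N by lia.
have r_gt0 : (0 < r)%N by lia.
exists 'I_r, [set [set: 'I_r]]; split.
  split; [by rewrite card_ord | by apply/set0Pn; exists setT; rewrite inE |].
  by move=> e; rewrite inE => /eqP ->; rewrite cardsT card_ord.
exists (color_mod r k_gt0); split.
  move=> v i; rewrite util_single_edge_color_mod // => w wv.
  by rewrite ffunE (negbTE wv).
have -> : SW [set [set: 'I_r]] (color_mod r k_gt0) = 0%N.
  by rewrite /SW big1 // => v _; apply: util_single_edge_color_mod.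
rewrite mulr0 ltr0n; pose v0 : 'I_r := Ordinal r_gt0.
pose c := recolor [ffun=> Ordinal k_gt0] v0 (Ordinal k_ge2).
apply: leq_trans (SW_le_OPT _ c); rewrite /SW (bigD1 v0) //= ltn_addr //.
rewrite util_happy card_gt0; apply/set0Pn; exists [set: 'I_r].
rewrite !inE eqxx /=; apply/(uniquely_coloredP c (in_setT v0)) => w _ wv.
by rewrite !ffunE eqxx (negbTE wv).
Qed.

Theorem theorem2 (r k : nat) (hr : (2 <= r)%N) (hk : (2 <= k)%N) :
  [/\ ((r <= k)%N ->
         PoA_ge r k ((k%:R / (k.-1)%:R) ^+ r.-1) /\
         PoA_le r k ((2 * k + r - 2)%N%:R / (2 * k - r)%N%:R)),
      ((r < 2 * k)%N -> (k < r)%N ->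
         PoA_ge r k ((k.-1)%:R / r%:R * (k%:R / (k.-1)%:R) ^+ r.-1) /\
         PoA_le r k ((k.-1)%:R / r%:R * ((2 * k + r - 2)%N%:R / (2 * k - r)%N%:R)))
    & ((2 * k <= r)%N -> PoA_infinite r k)].
Proof.
have r_neq0 : r%:R != 0 :> rat by rewrite pnatr_eq0; lia.
have r_div_r (x : rat) : r%:R / r%:R * x = x by rewrite divff // mul1r.
split.
- move=> r_le_k; rewrite -[X in PoA_ge _ _ X]r_div_r -[X in PoA_le _ _ X]r_div_r.
  split; first by apply: PoA_ge_complete_partite; rewrite ?r_le_k ?orbT //; lia.
  by apply: PoA_le_of_happy_bound => // [|V c e <-]; [lia | exact: card_happy_le].
- move=> r_lt_2k k_lt_r; split.
    by apply: PoA_ge_complete_partite => //; [lia | lia | apply/orP; left; lia].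
  apply: PoA_le_of_happy_bound => // V c e e_r.
  by have := card_happy_lt c (_ : (k < #|e|)%N); rewrite e_r => /(_ k_lt_r); lia.
- exact: PoA_infinite_single_edge.
Qed.
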